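(* Let $A$ be a finite set of actions and let $\{\pi_\theta\}_{\theta\in\mathbb{R}^d}$ be a family of probability distributions on $A$ with $\pi_\theta(a)>0$ and $\theta\mapsto\pi_\theta(a)$ differentiable for every $a\in A$. Let $R:A\to\mathbb{R}$ be the reward function, let $A$ also denote the random action drawn from $\pi_\theta$, and write $R=R(A)$ for the resulting reward random variable. Define the objective $\eta_s(\theta):=\mathbb{E}_{a\sim\pi_\theta}[R(a)]$, its gradient $g_s(\theta):=\nabla_\theta\eta_s(\theta)$, and the score function $S_\theta(a):=\nabla_\theta\log\pi_\theta(a)$. Assume that for all $a\in A$, $$\|S_\theta(a)\|\le G_{\max},\qquad |R(a)|\le R_{\max}.$$ Then $$\|g_s(\theta)\|\le \sqrt{2}\,G_{\max}R_{\max}\sqrt{I(A;R)},$$ where $I(A;R)$ is the mutual information between the action $A\sim\pi_\theta$ and the reward $R$.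
   Context: This is the ''one-shot game'' (horizon one): the state is fixed, the agent draws an action $a\sim\pi_\theta$ and receives reward $R(a)$. $\|\cdot\|$ is the Euclidean norm on $\mathbb{R}^d$. Mutual information is taken with the natural logarithm. *)

From mathcomp Require Import all_boot all_order all_algebra.
From mathcomp Require Import all_classical all_reals all_analysis.
Set Implicit Arguments. Unset Strict Implicit. Unset Printing Implicit Defensive.
Import Order.TTheory GRing.Theory Num.Theory.
Import numFieldNormedType.Exports.
Local Open Scope ring_scope.

Section Defs.
Variable R : realType.

Definition enorm (d : nat) (v : 'rV[R]_d) : R :=
  Num.sqrt (\sum_(i < d) v ord0 i ^+ 2).

Definition grad (d : nat) (f : 'rV[R]_d -> R) (theta : 'rV[R]_d) : 'rV[R]_d :=
  \row_(i < d) derive f theta (delta_mx ord0 i).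

Definition mutual_info (X Y : finType) (p : X -> Y -> R) : R :=
  \sum_(x : X) \sum_(y : Y)
     (if p x y == 0 then 0
      else p x y * ln (p x y / ((\sum_(y' : Y) p x y') * (\sum_(x' : X) p x' y)))).

Definition reward_vals (A : finType) (Rw : A -> R) := seq_sub (map Rw (enum A)).

Definition action_reward_joint (A : finType) (pi : A -> R) (Rw : A -> R)
  (a : A) (r : @reward_vals A Rw) : R :=
  pi a * (if Rw a == ssval r then 1 else 0).

Definition MI_action_reward (A : finType) (pi : A -> R) (Rw : A -> R) : R :=
  mutual_info (@action_reward_joint A pi Rw).

Definition eta_s (d : nat) (A : finType) (pi : 'rV[R]_d -> A -> R) (Rw : A -> R)
  (theta : 'rV[R]_d) : R := \sum_(a : A) pi theta a * Rw a.

Definition score (d : nat) (A : finType) (pi : 'rV[R]_d -> A -> R)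
  (theta : 'rV[R]_d) (a : A) : 'rV[R]_d :=
  grad (fun t => ln (pi t a)) theta.

End Defs.

(* Since the probabilities pi_theta(a) sum to 1, their gradients sum to 0, so
   any baseline c may be subtracted from the reward: g = E[(R - c) S_theta(A)]
   and hence |g| <= Gmax E|R - c|.  As R is a function of A, I(A; R) = H(R),
   and -ln q >= 1 - q gives H(R) >= 1 - m, where m is the probability of the
   most likely reward value r*.  The baseline c = r* gives
   E|R - c| <= 2 Rmax (1 - m) and c = 0 gives E|R| <= Rmax, so
   |g| <= Gmax Rmax min(2 (1 - m), 1) <= Gmax Rmax sqrt(2 (1 - m))
        <= sqrt 2 Gmax Rmax sqrt(I(A; R)). *)

From mathcomp Require Import all_boot all_order all_algebra.
From mathcomp Require Import all_classical all_reals all_analysis.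
From mathcomp Require Import lra ring.
Set Implicit Arguments. Unset Strict Implicit. Unset Printing Implicit Defensive.
Import Order.TTheory GRing.Theory Num.Theory.
Import numFieldNormedType.Exports.
Local Open Scope ring_scope.

Section Calculus.
Variable R : realType.

Lemma is_derive_sum_fun (V W : normedModType R) (I : finType) (h : I -> V -> W)
  (dh : I -> W) (x v : V) :
  (forall i, is_derive x v (h i) (dh i)) ->
  is_derive x v (fun t => \sum_i h i t) (\sum_i dh i).
Proof.
move=> hdh; rewrite (_ : (fun t => _) = \sum_i h i); last first.
  by apply/funext => t; rewrite fct_sumE.
by elim/big_ind2 : _ => // *; [exact: is_derive_cst | exact: is_deriveD].
Qed.

Lemma derive_ln_comp (V : normedModType R) (f : V -> R) (x v : V) :
  0 < f x -> differentiable f x ->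
  'D_v (fun t => ln (f t)) x = 'D_v f x / f x.
Proof.
move=> fx_gt0 df.
have ln_der := is_derive1_ln fx_gt0.
have dln1 : derivable (@ln R) (f x) 1 by exact: ex_derive.
have dln : differentiable (@ln R) (f x) by exact/derivable1_diffP.
have dlnf : differentiable (@ln R \o f) x by exact: differentiable_comp.
rewrite (deriveE v dlnf) diff_comp // (deriveE v df) /= (deriv1E dln1) derive1E.
by rewrite (_ : 'D_1 (@ln R) (f x) = (f x)^-1) //; exact: derive_val.
Qed.

End Calculus.

Lemma CauchySchwarz_sum (R : realFieldType) (I : finType) (x y : I -> R) :
  (\sum_i x i * y i) ^+ 2 <= (\sum_i x i ^+ 2) * (\sum_i y i ^+ 2).
Proof.
have sum_prod (u v : I -> R) : (\sum_i u i) * (\sum_j v j) = \sum_i \sum_j u i * v j.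
  by rewrite mulr_suml; apply: eq_bigr => i _; rewrite mulr_sumr.
have sum_xy_yx : (\sum_i x i ^+ 2) * (\sum_j y j ^+ 2)
    = \sum_i \sum_j x j ^+ 2 * y i ^+ 2.
  by rewrite sum_prod exchange_big; apply: eq_bigr => i _; apply: eq_bigr => j _.
rewrite -(@ler_pM2l _ 2) // [X in _ <= X]mulr_natl [X in _ <= X]mulr2n.
rewrite {1}sum_prod sum_xy_yx.
rewrite expr2 sum_prod mulr_sumr -big_split /=; apply: ler_sum => i _.
rewrite mulr_sumr -big_split /=; apply: ler_sum => j _.
have := sqr_ge0 (x i * y j - x j * y i); nra.
Qed.

Section EuclideanNorm.
Variable R : realType.

Lemma enorm_ge0 d (v : 'rV[R]_d) : 0 <= enorm v.
Proof. exact: sqrtr_ge0. Qed.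

Lemma enorm_sqr d (v : 'rV[R]_d) : enorm v ^+ 2 = \sum_i v ord0 i ^+ 2.
Proof. by rewrite sqr_sqrtr // sumr_ge0 // => i _; exact: sqr_ge0. Qed.

Lemma dot_le_enorm d (u v : 'rV[R]_d) :
  `|\sum_i u ord0 i * v ord0 i| <= enorm u * enorm v.
Proof.
rewrite -ler_sqr ?nnegrE ?mulr_ge0 ?enorm_ge0 //.
by rewrite real_normK ?num_real // exprMn !enorm_sqr CauchySchwarz_sum.
Qed.

Lemma enorm_row_sum_le d (A : finType) (w : A -> R) (S : A -> 'rV[R]_d) (G : R) :
  0 <= G -> (forall a, enorm (S a) <= G) ->
  enorm (\row_i \sum_a w a * S a ord0 i) <= G * \sum_a `|w a|.
Proof.
move=> G_ge0 S_le; set v := \row_i _.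
have [->|v_neq0] := eqVneq (enorm v) 0.
  by rewrite mulr_ge0 // sumr_ge0.
have v_gt0 : 0 < enorm v by rewrite lt_def v_neq0 enorm_ge0.
have vE i : v ord0 i = \sum_a w a * S a ord0 i by rewrite mxE.
rewrite -(ler_pM2l v_gt0) -expr2 enorm_sqr.
have -> : \sum_i v ord0 i ^+ 2 = \sum_a w a * \sum_i v ord0 i * S a ord0 i.
  under eq_bigr => i _ do rewrite expr2 {2}vE mulr_sumr.
  rewrite exchange_big; apply: eq_bigr => a _; rewrite mulr_sumr.
  by apply: eq_bigr => i _; rewrite mulrCA.
rewrite mulrA [X in _ <= X]mulrC mulr_suml; apply: (le_trans (ler_norm _)).
apply: (le_trans (ler_norm_sum _ _ _)); apply: ler_sum => a _.
rewrite normrM; apply: ler_wpM2l => //; apply: (le_trans (dot_le_enorm v (S a))).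
by apply: ler_wpM2l; [exact: enorm_ge0 | exact: S_le].
Qed.

End EuclideanNorm.

Section PolicyGradient.
Variables (R : realType) (d : nat) (A : finType) (pi : 'rV[R]_d -> A -> R).
Variable theta : 'rV[R]_d.
Hypothesis pi_gt0 : forall a, 0 < pi theta a.
Hypothesis pi_sum1 : forall t, \sum_a pi t a = 1.
Hypothesis pi_diff : forall a, differentiable (fun t => pi t a) theta.

Lemma derive_sum_mul (w : A -> R) (v : 'rV[R]_d) :
  'D_v (fun t => \sum_a w a * pi t a) theta
    = \sum_a w a * 'D_v (fun t => pi t a) theta.
Proof.
apply: derive_val; apply: is_derive_sum_fun => a; apply: is_deriveZ.
exact/derivableP/diff_derivable.
Qed.

Lemma sum_derive_eq0 (v : 'rV[R]_d) : \sum_a 'D_v (fun t => pi t a) theta = 0.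
Proof.
have := derive_sum_mul (fun=> 1) v.
have -> : (fun t => \sum_a 1 * pi t a) = cst 1.
  by apply/funext => t; under eq_bigr do rewrite mul1r; exact: pi_sum1.
by rewrite derive_cst => /esym; under eq_bigr do rewrite mul1r.
Qed.

Lemma score_entry a i :
  score pi theta a ord0 i = 'D_(delta_mx ord0 i) (fun t => pi t a) theta / pi theta a.
Proof. by rewrite /score /grad mxE derive_ln_comp. Qed.

Lemma grad_eta_s_baseline (Rw : A -> R) (c : R) :
  grad (eta_s pi Rw) theta
    = \row_i \sum_a (pi theta a * (Rw a - c)) * score pi theta a ord0 i.
Proof.
apply/rowP => i; rewrite /grad !mxE.
have -> : eta_s pi Rw = fun t => \sum_a Rw a * pi t a.
  by apply/funext => t; apply: eq_bigr => a _; rewrite mulrC.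
rewrite derive_sum_mul -[LHS]subr0 -[X in _ - X](mulr0 c).
rewrite -[X in _ - _ * X](sum_derive_eq0 (delta_mx ord0 i)).
rewrite mulr_sumr -sumrB; apply: eq_bigr => a _.
have pa_neq0 : pi theta a != 0 by rewrite gt_eqF.
by rewrite score_entry; field.
Qed.

Lemma enorm_grad_eta_s_le (Rw : A -> R) (G c : R) :
  0 <= G -> (forall a, enorm (score pi theta a) <= G) ->
  enorm (grad (eta_s pi Rw) theta) <= G * \sum_a pi theta a * `|Rw a - c|.
Proof.
move=> G_ge0 score_le; rewrite (grad_eta_s_baseline Rw c).
apply: (le_trans (enorm_row_sum_le _ G_ge0 score_le)).
apply: ler_wpM2l => //; apply: ler_sum => a _.
by rewrite normrM gtr0_norm.
Qed.

End PolicyGradient.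

Section RewardLaw.
Variables (R : realType) (A : finType) (p Rw : A -> R).
Hypothesis p_gt0 : forall a, 0 < p a.
Hypothesis p_sum1 : \sum_a p a = 1.

Definition reward_law (r : R) : R := \sum_(b | Rw b == r) p b.

Lemma reward_law_gt0 a : 0 < reward_law (Rw a).
Proof.
rewrite /reward_law (bigD1 a) //=; apply: (lt_le_trans (p_gt0 a)).
by rewrite lerDl sumr_ge0 // => b _; exact: ltW.
Qed.

Lemma reward_in_vals a : Rw a \in map Rw (enum A).
Proof. by rewrite map_f ?mem_enum. Qed.

Definition reward_val a : reward_vals Rw := SeqSub (reward_in_vals a).

Lemma action_reward_jointE a (r : reward_vals Rw) :
  action_reward_joint p a r = if r == reward_val a then p a else 0.
Proof.
have -> : (r == reward_val a) = (Rw a == ssval r).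
  by apply/eqP/eqP => [->|ra] //; apply: val_inj.
by rewrite /action_reward_joint; case: ifP; rewrite ?mulr1 ?mulr0.
Qed.

Lemma action_reward_joint_sumr a :
  \sum_(r : reward_vals Rw) action_reward_joint p a r = p a.
Proof.
rewrite (bigD1 (reward_val a)) //= action_reward_jointE eqxx big1 ?addr0 //.
by move=> r /negbTE r_neq; rewrite action_reward_jointE r_neq.
Qed.

Lemma action_reward_joint_suml (r : reward_vals Rw) :
  \sum_a action_reward_joint p a r = reward_law (ssval r).
Proof.
rewrite /reward_law [RHS]big_mkcond; apply: eq_bigr => a _.
by rewrite /action_reward_joint; case: ifP; rewrite ?mulr1 ?mulr0.
Qed.

Lemma MI_action_reward_entropy :
  MI_action_reward p Rw = - \sum_a p a * ln (reward_law (Rw a)).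
Proof.
rewrite /MI_action_reward /mutual_info -sumrN; apply: eq_bigr => a _.
rewrite (bigD1 (reward_val a)) //= [X in _ + X]big1 ?addr0; last first.
  by move=> r /negbTE r_neq; rewrite action_reward_jointE r_neq eqxx.
have pa_neq0 : p a != 0 by rewrite gt_eqF.
rewrite action_reward_jointE eqxx (negbTE pa_neq0).
rewrite action_reward_joint_sumr action_reward_joint_suml /=.
rewrite invfM mulrA mulfV // mul1r lnV ?posrE ?reward_law_gt0 //.
by rewrite mulrN.
Qed.

Lemma one_sub_max_le_MI m :
  (forall a, reward_law (Rw a) <= m) -> 1 - m <= MI_action_reward p Rw.
Proof.
move=> law_le; rewrite MI_action_reward_entropy -sumrN.
have -> : 1 - m = \sum_a p a * (1 - m) by rewrite -mulr_suml p_sum1 mul1r.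
apply: ler_sum => a _; rewrite -mulrN; apply: ler_wpM2l; first exact: ltW.
have q_gt0 := reward_law_gt0 a.
have : ln (1 + (reward_law (Rw a) - 1)) <= reward_law (Rw a) - 1.
  by rewrite le_ln1Dx // ltrBDr addNr.
rewrite addrC subrK; have := law_le a; lra.
Qed.

Lemma mean_abs_dev_le Rmax a0 : (forall a, `|Rw a| <= Rmax) ->
  \sum_a p a * `|Rw a - Rw a0| <= Rmax * (2 * (1 - reward_law (Rw a0))).
Proof.
move=> Rw_le.
have -> : 1 - reward_law (Rw a0) = \sum_(a | Rw a != Rw a0) p a.
  by rewrite -p_sum1 (bigID (fun a => Rw a == Rw a0)) /= addrC addrK.
rewrite (bigID (fun a => Rw a == Rw a0)) /= big1 ?add0r => [|a /eqP ->]; last first.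
  by rewrite subrr normr0 mulr0.
rewrite mulrA mulr_sumr; apply: ler_sum => a _.
rewrite [X in _ <= X]mulrC; apply: ler_wpM2l; first exact: ltW.
by apply: (le_trans (ler_normB _ _)); rewrite mulrC mulr_natl mulr2n lerD.
Qed.

Lemma mean_abs_le Rmax : (forall a, `|Rw a| <= Rmax) ->
  \sum_a p a * `|Rw a| <= Rmax.
Proof.
move=> Rw_le; rewrite -[Rmax]mul1r -p_sum1 mulr_suml.
by apply: ler_sum => a _; apply: ler_wpM2l; [exact: ltW | exact: Rw_le].
Qed.

End RewardLaw.

Lemma minr1_le_sqrtr (R : rcfType) (x : R) : Num.min x 1 <= Num.sqrt x.
Proof.
rewrite ge_min; apply/orP; have [x_le0|x_gt0] := leP x 0.
  by left; exact: le_trans x_le0 (sqrtr_ge0 x).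
have [x_le1|x_gt1] := leP x 1; [left | right].
  rewrite -{1}(sqr_sqrtr (ltW x_gt0)) expr2 -[leRHS]mulr1.
  by apply: ler_wpM2l; rewrite ?sqrtr_ge0 // -sqrtr1 ler_sqrt.
by rewrite -sqrtr1 ler_sqrt // ltW.
Qed.

Theorem theorem1 (R : realType) (d : nat) (A : finType)
  (pi : 'rV[R]_d -> A -> R) (Rw : A -> R) (Gmax Rmax : R) (theta : 'rV[R]_d) :
  (forall t a, 0 < pi t a) ->
  (forall t, \sum_(a : A) pi t a = 1) ->
  (forall a t, differentiable (fun t' => pi t' a) t) ->
  (forall a, enorm (score pi theta a) <= Gmax) ->
  (forall a, `|Rw a| <= Rmax) ->
  enorm (grad (eta_s pi Rw) theta)
    <= Num.sqrt 2 * Gmax * Rmax * Num.sqrt (MI_action_reward (pi theta) Rw).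
Proof.
move=> pi_gt0 pi_sum1 pi_diff score_le Rw_le.
have [a0 _] : {a0 : A | true}.
  case: (pickP (fun _ : A => true)) => [a0 _|A0]; first by exists a0.
  by move: (pi_sum1 theta); rewrite big_pred0 // => /eqP; rewrite eq_sym oner_eq0.
have G_ge0 : 0 <= Gmax := le_trans (enorm_ge0 _) (score_le a0).
have Rmax_ge0 : 0 <= Rmax := le_trans (normr_ge0 _) (Rw_le a0).
have [am _ am_mode] :=
  @arg_maxP _ _ A a0 predT (fun a => reward_law (pi theta) Rw (Rw a)) isT.
set m := reward_law _ _ (Rw am) in am_mode.
have law_le_m a : reward_law (pi theta) Rw (Rw a) <= m := am_mode a isT.
have grad_le c := enorm_grad_eta_s_le (pi_gt0 theta) pi_sum1 (pi_diff^~ theta)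
  Rw c G_ge0 score_le.
have grad_le_mode : enorm (grad (eta_s pi Rw) theta) <= Gmax * Rmax * (2 * (1 - m)).
  rewrite -mulrA; apply: (le_trans (grad_le (Rw am))); apply: ler_wpM2l => //.
  exact: (mean_abs_dev_le (pi_gt0 theta) (pi_sum1 theta) am Rw_le).
have grad_le_zero : enorm (grad (eta_s pi Rw) theta) <= Gmax * Rmax.
  apply: (le_trans (grad_le 0)); apply: ler_wpM2l => //.
  under eq_bigr do rewrite subr0.
  exact: (mean_abs_le (pi_gt0 theta) (pi_sum1 theta) Rw_le).
apply: (le_trans (y := Gmax * Rmax * Num.min (2 * (1 - m)) 1)).
  by rewrite minr_pMr ?mulr_ge0 // le_min mulr1 grad_le_mode grad_le_zero.
have -> : Num.sqrt 2 * Gmax * Rmax * Num.sqrt (MI_action_reward (pi theta) Rw)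
    = Gmax * Rmax * Num.sqrt (2 * MI_action_reward (pi theta) Rw).
  by rewrite sqrtrM //; ring.
apply: ler_wpM2l; first exact: mulr_ge0.
apply: (le_trans (minr1_le_sqrtr _)); apply: ler_wsqrtr.
rewrite ler_pM2l //.
exact: (one_sub_max_le_MI (pi_gt0 theta) (pi_sum1 theta) law_le_m).
Qed.
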